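(* Let $V=\bigoplus_{n\ge 0}V_n$ be a VOA over $\mathbb{Q}$ with $\dim V_0=1$, having a nondegenerate invariant bilinear form $\langle\ ,\ \rangle$. Let $J\subseteq V$ be a homogeneous IVOA and let $J^{\circ}=\{u\in V\mid \langle u,J\rangle\subseteq\mathbb{Z}\}$. Then $\frac{L(1)^n}{n!}J^{\circ}\subseteq J^{\circ}$ for all integers $n\ge 0$.
   Context: A VOA over $\mathbb{Q}$ has vacuum $\mathbf{1}$, conformal vector $\omega$, vertex operators $Y(a,z)=\sum_{n}a_nz^{-n-1}$, and $L(n)=\omega_{n+1}$. An invariant bilinear form satisfies $\langle Y(a,z)b,c\rangle=\langle b,Y(e^{zL(1)}(-z^{-2})^{L(0)}a,z^{-1})c\rangle$ (in particular $L(1)$ and $L(-1)$ are adjoint). An integral form (IF) in $V$ is an additive subgroup which is the $\mathbb{Z}$-span of a $\mathbb{Q}$-basis of $V$, closed under all products $a_kb$ ($k\in\mathbb{Z}$), and containing a positive integer multiple of $\mathbf{1}$ and of $\omega$. An IVOA is an IF containing $\mathbf{1}$. $J$ is homogeneous if $J=\bigoplus_n(J\cap V_n)$. *)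

From HB Require Import structures.
From mathcomp Require Import all_boot all_order all_algebra.
Set Implicit Arguments.
Unset Strict Implicit.
Unset Printing Implicit Defensive.
Import Order.TTheory GRing.Theory Num.Theory.
Local Open Scope ring_scope.

Definition binq (r : int) (i : nat) : rat :=
  (\prod_(j < i) (r%:~R - (j : nat)%:R)) / (i`!)%:R.

Definition isZ (q : rat) : Prop := exists z : int, q = z%:~R.

Section VOA.
Variable V : lmodType rat.

(* Y k a b  stands for the product  a_k b ;  Y(a,z) = sum_k a_k z^{-k-1}. *)
Definition Lop (om : V) (Y : int -> V -> V -> V) (n : int) (v : V) : V :=
  Y (n + 1) om v.

Definition homog (om : V) (Y : int -> V -> V -> V) (n : nat) (v : V) : Prop :=
  Lop om Y 0 v = n%:R *: v.

(* Borcherds (Jacobi) identity in components, with finite sums: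
   N is any bound beyond which all terms on both sides vanish. *)
Definition borcherds (Y : int -> V -> V -> V) : Prop :=
  forall (p q r : int) (a b d : V) (N : nat),
    (forall i : nat, (N <= i)%N ->
        [/\ Y (r + i%:Z) a b = 0, Y (q + i%:Z) b d = 0 & Y (p + i%:Z) a d = 0]) ->
    \sum_(i < N) binq p i *: Y (p + q - (i : nat)%:Z) (Y (r + (i : nat)%:Z) a b) d
    = \sum_(i < N) ((-1) ^+ (i : nat) * binq r i) *:
        (Y (p + r - (i : nat)%:Z) a (Y (q + (i : nat)%:Z) b d)
         - (-1 : rat) ^ r *: Y (q + r - (i : nat)%:Z) b (Y (p + (i : nat)%:Z) a d)).

Record is_VOA (vac om : V) (Y : int -> V -> V -> V) (c : rat) : Prop := {
  Y_linl : forall k (x : rat) a b d, Y k (x *: a + b) d = x *: Y k a d + Y k b d;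
  Y_linr : forall k (x : rat) a b d, Y k a (x *: b + d) = x *: Y k a b + Y k a d;
  Y_trunc : forall a b, exists N : int, forall k : int, N <= k -> Y k a b = 0;
  Y_vac : forall (k : int) b, Y k vac b = if k == -1 then b else 0;
  Y_create : forall (k : int) a, 0 <= k -> Y k a vac = 0;
  Y_create1 : forall a, Y (-1) a vac = a;
  Y_jacobi : borcherds Y;
  Y_virasoro : forall (m n : int) v,
    Lop om Y m (Lop om Y n v) - Lop om Y n (Lop om Y m v)
    = (m - n)%:~R *: Lop om Y (m + n) v
      + ((m + n == 0)%:R * ((m ^+ 3 - m)%:~R / 12%:R) * c) *: v;
  Y_deriv : forall (k : int) a b, Y k (Lop om Y (-1) a) b = - k%:~R *: Y (k - 1) a b;
  V_graded : forall v, exists s : seq (nat * V),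
    (forall x, x \in s -> homog om Y x.1 x.2) /\ v = \sum_(x <- s) x.2;
  V_findim : forall n : nat, exists s : seq V, forall v, homog om Y n v ->
    exists cf : nat -> rat, v = \sum_(i < size s) cf i *: s`_i
}.

Definition dimV0_one (om : V) (Y : int -> V -> V -> V) : Prop :=
  exists v0 : V, [/\ v0 != 0, homog om Y 0 v0 &
    forall v, homog om Y 0 v -> exists x : rat, v = x *: v0].

(* nondegenerate invariant bilinear form; invariance written in components:
   for a in V_w,  <a_k b, d> = (-1)^w sum_{j>=0} (1/j!) <b, (L(1)^j a)_{2w-k-j-2} d>
   (terms with j > w vanish since L(1)^j a in V_{w-j}). *)
Record inv_form (om : V) (Y : int -> V -> V -> V) (B : V -> V -> rat) : Prop := {
  B_linl : forall (x : rat) a b d, B (x *: a + b) d = x * B a d + B b d;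
  B_linr : forall (x : rat) a b d, B a (x *: b + d) = x * B a b + B a d;
  B_nondegl : forall u, (forall v, B u v = 0) -> u = 0;
  B_nondegr : forall v, (forall u, B u v = 0) -> v = 0;
  B_inv : forall (w : nat) a, homog om Y w a -> forall (k : int) b d,
    B (Y k a b) d = (-1) ^+ w * \sum_(j < w.+1)
       ((j : nat)`!%:R)^-1 * B b (Y (2 * w%:Z - k - (j : nat)%:Z - 2)
                                     (iter j (Lop om Y 1) a) d)
}.

Definition Qbasis (Bs : V -> Prop) : Prop :=
  (forall (s : seq V) (cf : V -> rat), uniq s -> (forall x, x \in s -> Bs x) ->
     \sum_(x <- s) cf x *: x = 0 -> forall x, x \in s -> cf x = 0)
  /\ (forall v, exists (s : seq V) (cf : V -> rat),
        (forall x, x \in s -> Bs x) /\ v = \sum_(x <- s) cf x *: x).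

Definition Zspan (Bs : V -> Prop) (v : V) : Prop :=
  exists (s : seq V) (cf : V -> rat),
    [/\ forall x, x \in s -> Bs x, forall x, isZ (cf x) & v = \sum_(x <- s) cf x *: x].

Record is_IF (vac om : V) (Y : int -> V -> V -> V) (J : V -> Prop) : Prop := {
  IF_basis : exists Bs : V -> Prop, Qbasis Bs /\ (forall v, J v <-> Zspan Bs v);
  IF_prod : forall (k : int) a b, J a -> J b -> J (Y k a b);
  IF_vac : exists m : nat, (0 < m)%N /\ J (m%:R *: vac);
  IF_om : exists m : nat, (0 < m)%N /\ J (m%:R *: om)
}.

Definition is_IVOA (vac om : V) (Y : int -> V -> V -> V) (J : V -> Prop) : Prop :=
  is_IF vac om Y J /\ J vac.

Definition homogeneous (om : V) (Y : int -> V -> V -> V) (J : V -> Prop) : Prop :=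
  forall v, J v -> exists s : seq (nat * V),
    (forall x, x \in s -> homog om Y x.1 x.2 /\ J x.2) /\ v = \sum_(x <- s) x.2.

Definition Jdual (B : V -> V -> rat) (J : V -> Prop) (u : V) : Prop :=
  forall v, J v -> isZ (B u v).

End VOA.

(** Since ω has weight 2 and L(1)ω = 0, invariance of the form makes L(1)
    adjoint to L(-1).  Hence ⟨L(1)^n u / n!, v⟩ = ⟨u, L(-1)^n v / n!⟩, and by
    the derivation property L(-1)^n v / n! = v_{-n-1} 1, which lies in J
    because J contains 1 and is closed under products. *)

From HB Require Import structures.
From mathcomp Require Import all_boot all_order all_algebra.
Set Implicit Arguments.
Unset Strict Implicit.
Import Order.TTheory GRing.Theory Num.Theory.
Local Open Scope ring_scope.

Section InvariantFormAdjoint.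

Variables (V : lmodType rat) (vac om : V) (Y : int -> V -> V -> V) (c : rat).
Hypothesis HV : is_VOA vac om Y c.
Variable B : V -> V -> rat.
Hypothesis HB : inv_form om Y B.

Local Notation L := (Lop om Y).

Lemma Y_0r k a : Y k a 0 = 0.
Proof.
have := Y_linr HV k 1 a 0 0; rewrite !scale1r !addr0 => H.
by apply: (addrI (Y k a 0)); rewrite addr0 -H.
Qed.

Lemma Y_0l k d : Y k 0 d = 0.
Proof.
have := Y_linl HV k 1 0 0 d; rewrite !scale1r !addr0 => H.
by apply: (addrI (Y k 0 d)); rewrite addr0 -H.
Qed.

Lemma B_0l d : B 0 d = 0.
Proof.
have := B_linl HB 1 0 0 d; rewrite !scale1r !addr0 !mul1r => H.
by apply: (addrI (B 0 d)); rewrite addr0 -H.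
Qed.

Lemma B_0r a : B a 0 = 0.
Proof.
have := B_linr HB 1 a 0 0; rewrite !scale1r !addr0 !mul1r => H.
by apply: (addrI (B a 0)); rewrite addr0 -H.
Qed.

Lemma B_scalel x a d : B (x *: a) d = x * B a d.
Proof. by rewrite -[x *: a]addr0 (B_linl HB) B_0l addr0. Qed.

Lemma B_scaler x a d : B a (x *: d) = x * B a d.
Proof. by rewrite -[x *: d]addr0 (B_linr HB) B_0r addr0. Qed.

Lemma Lop_vac (n : int) : -1 <= n -> L n vac = 0.
Proof. by move=> hn; apply: (Y_create HV); rewrite -(lerD2r 1) in hn. Qed.

Lemma Lop_vac_m2 : L (-2) vac = om.
Proof. exact: (Y_create1 HV). Qed.

(* Both facts come from the Virasoro relation applied to ω = L(-2) 1. *)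
Lemma Lop1_om : L 1 om = 0.
Proof.
have := Y_virasoro HV 1 (-2) vac.
rewrite Lop_vac_m2 Lop_vac // /Lop Y_0r subr0 => ->.
by rewrite (Y_create HV) // scaler0 add0r /= !mul0r scale0r.
Qed.

Lemma homog_om : homog om Y 2 om.
Proof.
have := Y_virasoro HV 0 (-2) vac.
rewrite /homog Lop_vac_m2 Lop_vac // /Lop Y_0r subr0 sub0r opprK => ->.
by rewrite /= !mul0r scale0r addr0.
Qed.

Lemma B_Lop1_adj a d : B (L 1 a) d = B a (L (-1) d).
Proof.
rewrite {1}/Lop (B_inv HB homog_om) !big_ord_recr big_ord0 /=.
rewrite Lop1_om /Lop Y_0r !Y_0l !B_0r.
by rewrite !mulr0 !addr0 add0r sqrrN expr1n fact0 invr1 !mul1r.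
Qed.

Lemma B_iter_Lop1_adj n a d :
  B (iter n (L 1) a) d = B a (iter n (L (-1)) d).
Proof.
elim: n a d => [|n IHn] a d //=.
by rewrite B_Lop1_adj IHn -iterSr.
Qed.

Lemma Y_iter_Lopm1 n m a b :
  m`!%:R *: Y (- (m.+1)%:Z) (iter n (L (-1)) a) b
  = (m + n)`!%:R *: Y (- (m + n).+1%:Z) a b.
Proof.
elim: n m => [|n IHn] m; first by rewrite addn0.
rewrite /= (Y_deriv HV) scalerA.
have -> : - (m.+1)%:Z - 1 = - (m.+2)%:Z by rewrite -opprD -PoszD addn1.
have -> : m`!%:R * - (- m.+1%:Z)%:~R = (m.+1)`!%:R :> rat.
  by rewrite intrN opprK factS natrM mulrC.
by rewrite IHn addSnnS.
Qed.

Lemma iter_Lopm1_vac n a : iter n (L (-1)) a = n`!%:R *: Y (- (n.+1)%:Z) a vac.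
Proof. by rewrite -(Y_iter_Lopm1 n 0) fact0 scale1r (Y_create1 HV). Qed.

End InvariantFormAdjoint.

Theorem lemma2p2 (V : lmodType rat) (vac om : V) (Y : int -> V -> V -> V) (c : rat)
  (HV : is_VOA vac om Y c) (HV0 : dimV0_one om Y)
  (B : V -> V -> rat) (HB : inv_form om Y B)
  (J : V -> Prop) (HJ : is_IVOA vac om Y J) (Hhom : homogeneous om Y J) :
  forall (n : nat) (u : V), Jdual B J u ->
    Jdual B J ((n`!%:R)^-1 *: iter n (Lop om Y 1) u).
Proof.
move=> n u Ju v Jv.
rewrite (B_scalel HB) (B_iter_Lop1_adj HV HB) (iter_Lopm1_vac HV) (B_scaler HB).
rewrite mulrA mulVf ?mul1r ?pnatr_eq0 -?lt0n ?fact_gt0 //.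
by apply: Ju; apply: (IF_prod HJ.1) => //; exact: HJ.2.
Qed.
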